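(* Let $\Lambda=[\lambda_{\min},\lambda_{\max}]$, $F\in C^2(\Lambda)$, let $\lambda_b\in\{\lambda_{\min},\lambda_{\max}\}$ and let $\lambda_0=\lambda_b$, $\lambda_1,\lambda_2$ be the boundary node and the next two grid nodes moving into the interior, with $h_0=|\lambda_1-\lambda_0|$, $h_1=|\lambda_2-\lambda_1|$ and $h=\max(h_0,h_1)$. Let $d_0=\frac{F(\lambda_1)-F(\lambda_0)}{\lambda_1-\lambda_0}$, $d_1=\frac{F(\lambda_2)-F(\lambda_1)}{\lambda_2-\lambda_1}$, and let $m_b$ be the Fritsch–Carlson boundary slope: $m_b=\frac{(2h_0+h_1)d_0-h_0d_1}{h_0+h_1}$ if $d_0d_1>0$ and $m_b=0$ if $d_0d_1\le0$. Then $$|m_b-F'(\lambda_b)|\le C\,h\,\|F''\|_{\infty,\Lambda}$$ for a constant $C$ depending only on mesh regularity.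
   Context: $\|g\|_{\infty,\Lambda}=\sup_{\lambda\in\Lambda}|g(\lambda)|$. ''Mesh regularity'' refers to bounds on the ratios of neighbouring grid steps. *)

From Stdlib Require Import Reals Lra.
From Coquelicot Require Import Coquelicot.
Open Scope R_scope.

Definition deriv_on (a b : R) (f f' : R -> R) : Prop :=
  forall x, a <= x <= b ->
    filterlim (fun y => (f y - f x) / (y - x))
      (within (fun y => a <= y <= b /\ y <> x) (locally x))
      (locally (f' x)).

Definition continuous_on_cc (a b : R) (g : R -> R) : Prop :=
  forall x, a <= x <= b ->
    filterlim g (within (fun y => a <= y <= b) (locally x)) (locally (g x)).

Definition C2_on (a b : R) (F F1 F2 : R -> R) : Prop :=
  deriv_on a b F F1 /\ deriv_on a b F1 F2 /\ continuous_on_cc a b F2.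

(* ||g||_{oo,[a,b]} = sup_{x in [a,b]} |g x| (as a real; finite for
   continuous g on a compact interval). *)
Definition sup_norm (a b : R) (g : R -> R) : R :=
  real (Lub_Rbar (fun y => exists x, a <= x <= b /\ y = Rabs (g x))).

Definition fc_boundary_slope (h0 h1 d0 d1 : R) : R :=
  if Rlt_dec 0 (d0 * d1)
  then ((2 * h0 + h1) * d0 - h0 * d1) / (h0 + h1)
  else 0.

From Stdlib Require Import Reals Lra.
From Coquelicot Require Import Coquelicot.
Open Scope R_scope.

(* By the mean value theorem each divided difference is a value of F' at a
   point of its cell, and F' is ||F''||-Lipschitz; hence d0 is within
   M h0 of F'(l0) and |d0 - d1| <= M (h0 + h1), where M = ||F''||.  If
   d0 d1 > 0, then m_b - F'(l0) = (d0 - F'(l0)) + h0 / (h0 + h1) (d0 - d1);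
   otherwise d0 and d1 have opposite signs, so |d0| <= |d0 - d1| and
   |F'(l0)| <= |d0 - F'(l0)| + |d0|.  Either way C = 3 works, whatever the
   mesh ratio. *)

Lemma filterlim_within_eps (P : R -> Prop) (g : R -> R) (x l : R) :
  filterlim g (within P (locally x)) (locally l) ->
  forall eps, 0 < eps -> exists d, 0 < d /\
    forall y, P y -> Rabs (y - x) < d -> Rabs (g y - l) < eps.
Proof.
  intros H eps Heps.
  destruct (H (fun z => Rabs (z - l) < eps)) as [d Hd].
  { exists (mkposreal eps Heps); intros z Hz; exact Hz. }
  exists d; split; [apply cond_pos |].
  intros y Py Hy; exact (Hd y Hy Py).
Qed.

Definition continuous_on_eps (a b : R) (g : R -> R) : Prop :=
  forall x, a <= x <= b -> forall eps, 0 < eps -> exists d, 0 < d /\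
    forall y, a <= y <= b -> Rabs (y - x) < d -> Rabs (g y - g x) < eps.

Lemma continuous_on_cc_eps (a b : R) (g : R -> R) :
  continuous_on_cc a b g -> continuous_on_eps a b g.
Proof. intros H x Hx; exact (filterlim_within_eps _ _ _ _ (H x Hx)). Qed.

Lemma deriv_on_eps (a b : R) (f f' : R -> R) :
  deriv_on a b f f' -> forall x, a <= x <= b ->
  forall eps, 0 < eps -> exists d, 0 < d /\
    forall y, a <= y <= b -> y <> x -> Rabs (y - x) < d ->
      Rabs ((f y - f x) / (y - x) - f' x) < eps.
Proof.
  intros H x Hx eps Heps.
  destruct (filterlim_within_eps _ _ _ _ (H x Hx) eps Heps) as [d [Hd Hy]].
  exists d; split; [exact Hd |].
  intros y Hyab Hyx; exact (Hy y (conj Hyab Hyx)).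
Qed.

Lemma deriv_on_continuous_eps (a b : R) (f f' : R -> R) :
  deriv_on a b f f' -> continuous_on_eps a b f.
Proof.
  intros H x Hx eps Heps.
  destruct (deriv_on_eps a b f f' H x Hx 1 Rlt_0_1) as [d [Hd Hy]].
  set (K := Rabs (f' x) + 1).
  assert (HK : 0 < K) by (unfold K; pose proof (Rabs_pos (f' x)); lra).
  exists (Rmin d (eps / K)); split.
  { apply Rmin_glb_lt; [lra | apply Rdiv_lt_0_compat; lra]. }
  intros y Hyab Hyx.
  destruct (Req_dec y x) as [-> | Hne].
  { unfold Rminus; rewrite Rplus_opp_r, Rabs_R0; lra. }
  pose proof (Rmin_l d (eps / K)); pose proof (Rmin_r d (eps / K)).
  assert (Hslope : Rabs ((f y - f x) / (y - x)) <= K).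
  { pose proof (Hy y Hyab Hne ltac:(lra)).
    pose proof (Rabs_triang ((f y - f x) / (y - x) - f' x) (f' x)).
    replace ((f y - f x) / (y - x) - f' x + f' x)
      with ((f y - f x) / (y - x)) in * by ring.
    unfold K; lra. }
  replace (f y - f x) with ((f y - f x) / (y - x) * (y - x)) by (field; lra).
  rewrite Rabs_mult.
  apply Rle_lt_trans with (K * Rabs (y - x)).
  { apply Rmult_le_compat_r; [apply Rabs_pos | exact Hslope]. }
  replace eps with (K * (eps / K)) by (field; lra).
  apply Rmult_lt_compat_l; lra.
Qed.

(* Extending a function on [a,b] by constants outside [a,b] lets the mean
   value and extreme value theorems for functions on R apply. *)
Definition clamp (a b x : R) : R := Rmax a (Rmin b x).

Lemma clamp_in (a b x : R) : a <= b -> a <= clamp a b x <= b.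
Proof. intros; unfold clamp, Rmax, Rmin; repeat destruct Rle_dec; lra. Qed.

Lemma clamp_id (a b x : R) : a <= x <= b -> clamp a b x = x.
Proof. intros; unfold clamp, Rmax, Rmin; repeat destruct Rle_dec; lra. Qed.

Lemma Rabs_clamp_sub_le (a b x y : R) :
  a <= b -> Rabs (clamp a b y - clamp a b x) <= Rabs (y - x).
Proof.
  intros; unfold clamp, Rmax, Rmin; repeat destruct Rle_dec;
  unfold Rabs; repeat destruct Rcase_abs; lra.
Qed.

Lemma continuity_pt_clamp (a b : R) (g : R -> R) :
  a <= b -> continuous_on_eps a b g ->
  forall x, continuity_pt (fun t => g (clamp a b t)) x.
Proof.
  intros Hab H x eps Heps.
  destruct (H (clamp a b x) (clamp_in a b x Hab) eps Heps) as [d [Hd Hy]].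
  exists d; split; [exact Hd |].
  intros y [_ Hyx]; simpl in *; unfold R_dist in *.
  apply Hy; [apply clamp_in; exact Hab |].
  eapply Rle_lt_trans; [apply Rabs_clamp_sub_le; exact Hab | exact Hyx].
Qed.

Lemma is_derive_clamp (a b : R) (f f' : R -> R) :
  deriv_on a b f f' -> forall x, a < x < b ->
  is_derive (fun t => f (clamp a b t)) x (f' x).
Proof.
  intros H x Hx; apply is_derive_Reals; intros eps Heps.
  destruct (deriv_on_eps a b f f' H x ltac:(lra) eps Heps) as [d [Hd Hy]].
  assert (Hpos : 0 < Rmin d (Rmin (x - a) (b - x))) by (repeat apply Rmin_glb_lt; lra).
  exists (mkposreal _ Hpos); intros k Hk Hka; simpl in Hka.
  pose proof (Rmin_l d (Rmin (x - a) (b - x))).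
  pose proof (Rmin_r d (Rmin (x - a) (b - x))).
  pose proof (Rmin_l (x - a) (b - x)); pose proof (Rmin_r (x - a) (b - x)).
  assert (Hk' : - Rabs k <= k <= Rabs k) by (unfold Rabs; destruct Rcase_abs; lra).
  rewrite (clamp_id a b (x + k)), (clamp_id a b x) by lra.
  specialize (Hy (x + k) ltac:(lra) ltac:(lra)).
  replace (x + k - x) with k in Hy by ring.
  apply Hy; lra.
Qed.

Lemma deriv_on_MVT (a b : R) (f f' : R -> R) :
  a <= b -> deriv_on a b f f' -> forall u v, a <= u <= b -> a <= v <= b ->
  exists c, Rmin u v <= c <= Rmax u v /\ f v - f u = f' c * (v - u).
Proof.
  intros Hab H u v Hu Hv.
  destruct (MVT_gen (fun t => f (clamp a b t)) u v f') as [c [Hc Heq]].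
  - intros x Hx; apply (is_derive_clamp a b f f' H).
    unfold Rmin, Rmax in Hx; destruct Rle_dec in Hx; lra.
  - intros x _; apply continuity_pt_clamp; [exact Hab |].
    exact (deriv_on_continuous_eps a b f f' H).
  - exists c; split; [exact Hc |].
    rewrite (clamp_id a b v), (clamp_id a b u) in Heq by lra; exact Heq.
Qed.

Lemma Rabs_le_sup_norm (a b : R) (g : R -> R) :
  a <= b -> continuous_on_eps a b g ->
  forall c, a <= c <= b -> Rabs (g c) <= sup_norm a b g.
Proof.
  intros Hab H c Hc.
  destruct (continuity_ab_maj (fun t => Rabs (g (clamp a b t))) a b Hab)
    as [xmax [Hmax _]].
  { intros x _; apply (continuity_pt_comp (fun t => g (clamp a b t)) Rabs).
    - exact (continuity_pt_clamp a b g Hab H x).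
    - apply Rcontinuity_abs. }
  unfold sup_norm.
  set (E := fun y => exists x, a <= x <= b /\ y = Rabs (g x)).
  destruct (Lub_Rbar_correct E) as [Hub Hlub].
  assert (Hfin : Rbar_le (Lub_Rbar E) (Rabs (g (clamp a b xmax)))).
  { apply Hlub; intros y [x [Hx ->]]; simpl.
    specialize (Hmax x Hx); rewrite (clamp_id a b x Hx) in Hmax; exact Hmax. }
  assert (Hgc : Rbar_le (Rabs (g c)) (Lub_Rbar E)).
  { apply Hub; exists c; split; [exact Hc | reflexivity]. }
  destruct (Lub_Rbar E); simpl in *; try contradiction; exact Hgc.
Qed.

Lemma deriv_on_Lipschitz (a b M : R) (f f' : R -> R) :
  a <= b -> deriv_on a b f f' -> (forall c, a <= c <= b -> Rabs (f' c) <= M) ->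
  forall x y, a <= x <= b -> a <= y <= b -> Rabs (f x - f y) <= M * Rabs (x - y).
Proof.
  intros Hab H HM x y Hx Hy.
  destruct (deriv_on_MVT a b f f' Hab H y x Hy Hx) as [c [Hc ->]].
  rewrite Rabs_mult; apply Rmult_le_compat_r; [apply Rabs_pos |].
  apply HM; unfold Rmin, Rmax in Hc; destruct Rle_dec in Hc; lra.
Qed.

Lemma divided_difference_dist (a b M : R) (f f' : R -> R) (x y z : R) :
  a <= b -> deriv_on a b f f' -> 0 <= M ->
  (forall u v, a <= u <= b -> a <= v <= b -> Rabs (f' u - f' v) <= M * Rabs (u - v)) ->
  a <= x <= b -> a <= y <= b -> a <= z <= b -> x <> y ->
  Rabs ((f y - f x) / (y - x) - f' z) <= M * (Rabs (x - z) + Rabs (y - z)).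
Proof.
  intros Hab H HM Hlip Hx Hy Hz Hxy.
  destruct (deriv_on_MVT a b f f' Hab H x y Hx Hy) as [c [Hc Heq]].
  assert (Hcz : Rabs (c - z) <= Rabs (x - z) + Rabs (y - z)).
  { unfold Rmin, Rmax in Hc; destruct Rle_dec in Hc;
    unfold Rabs; repeat destruct Rcase_abs; lra. }
  replace ((f y - f x) / (y - x)) with (f' c) by (rewrite Heq; field; lra).
  eapply Rle_trans; [apply Hlip; unfold Rmin, Rmax in Hc; destruct Rle_dec in Hc; lra |].
  apply Rmult_le_compat_l; assumption.
Qed.

Lemma fc_boundary_slope_error (h0 h1 d0 d1 s K : R) :
  0 < h0 -> 0 < h1 ->
  Rabs (d0 - s) <= K * h0 -> Rabs (d0 - d1) <= K * (h0 + h1) ->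
  Rabs (fc_boundary_slope h0 h1 d0 d1 - s) <= 3 * Rmax h0 h1 * K.
Proof.
  intros H0 H1 Hs Hd.
  pose proof (Rmax_l h0 h1); pose proof (Rmax_r h0 h1).
  assert (HK : 0 <= K) by (pose proof (Rabs_pos (d0 - s)); nra).
  unfold fc_boundary_slope; destruct Rlt_dec as [Hpos | Hneg].
  - replace (((2 * h0 + h1) * d0 - h0 * d1) / (h0 + h1) - s)
      with ((d0 - s) + h0 / (h0 + h1) * (d0 - d1)) by (field; lra).
    assert (Hw : 0 <= h0 / (h0 + h1)) by (apply Rlt_le, Rdiv_lt_0_compat; lra).
    assert (Hcorr : h0 / (h0 + h1) * Rabs (d0 - d1) <= K * h0).
    { apply Rle_trans with (h0 / (h0 + h1) * (K * (h0 + h1))).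
      - apply Rmult_le_compat_l; assumption.
      - right; field; lra. }
    eapply Rle_trans; [apply Rabs_triang |].
    rewrite Rabs_mult, (Rabs_pos_eq _ Hw); nra.
  - assert (Hsign : Rabs d0 <= Rabs (d0 - d1))
      by (unfold Rabs; repeat destruct Rcase_abs; nra).
    assert (Htri : Rabs (0 - s) <= Rabs (d0 - s) + Rabs d0)
      by (unfold Rabs; repeat destruct Rcase_abs; lra).
    nra.
Qed.

Theorem mainTheorem14 :
  forall rho : R, 1 <= rho ->
  exists C : R, 0 <= C /\
  forall (lmin lmax : R) (F F1 F2 : R -> R) (l0 l1 l2 : R),
    C2_on lmin lmax F F1 F2 ->
    ((l0 = lmin /\ l0 < l1 /\ l1 < l2 /\ l2 <= lmax) \/
     (l0 = lmax /\ l0 > l1 /\ l1 > l2 /\ l2 >= lmin)) ->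
    let h0 := Rabs (l1 - l0) in
    let h1 := Rabs (l2 - l1) in
    h0 <= rho * h1 -> h1 <= rho * h0 ->
    let h := Rmax h0 h1 in
    let d0 := (F l1 - F l0) / (l1 - l0) in
    let d1 := (F l2 - F l1) / (l2 - l1) in
    Rabs (fc_boundary_slope h0 h1 d0 d1 - F1 l0)
      <= C * h * sup_norm lmin lmax F2.
Proof.
  intros rho _; exists 3; split; [lra |].
  intros lmin lmax F F1 F2 l0 l1 l2 [HF [HF1 HF2]] Hnodes h0 h1 _ _ h d0 d1.
  assert (Hab : lmin <= lmax) by lra.
  assert (I0 : lmin <= l0 <= lmax) by lra.
  assert (I1 : lmin <= l1 <= lmax) by lra.
  assert (I2 : lmin <= l2 <= lmax) by lra.
  set (M := sup_norm lmin lmax F2).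
  assert (HM : forall c, lmin <= c <= lmax -> Rabs (F2 c) <= M)
    by exact (Rabs_le_sup_norm _ _ F2 Hab (continuous_on_cc_eps _ _ _ HF2)).
  assert (M0 : 0 <= M) by exact (Rle_trans _ _ _ (Rabs_pos _) (HM l0 I0)).
  pose proof (deriv_on_Lipschitz _ _ _ F1 F2 Hab HF1 HM) as Hlip.
  assert (Hh : 0 < h0 /\ 0 < h1 /\ Rabs (l0 - l1) = h0)
    by (unfold h0, h1, Rabs; repeat destruct Rcase_abs; lra).
  destruct Hh as [Hh0 [Hh1 Hh0_sym]].
  assert (E00 := divided_difference_dist _ _ _ F F1 l0 l1 l0 Hab HF M0 Hlip I0 I1 I0 ltac:(lra)).
  assert (E01 := divided_difference_dist _ _ _ F F1 l0 l1 l1 Hab HF M0 Hlip I0 I1 I1 ltac:(lra)).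
  assert (E11 := divided_difference_dist _ _ _ F F1 l1 l2 l1 Hab HF M0 Hlip I1 I2 I1 ltac:(lra)).
  fold d0 d1 h0 h1 in E00, E01, E11.
  rewrite Rminus_diag, Rabs_R0 in E00, E01, E11.
  rewrite Hh0_sym in E01.
  apply fc_boundary_slope_error; [exact Hh0 | exact Hh1 | lra |].
  pose proof (Rabs_triang (d0 - F1 l1) (F1 l1 - d1)).
  rewrite Rabs_minus_sym in E11.
  replace (d0 - F1 l1 + (F1 l1 - d1)) with (d0 - d1) in * by ring.
  lra.
Qed.
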